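(* Let $k>1$, let $n=2m$ be even, and let $f:\mathbb{F}_2^n\to\mathbb{Z}_{2^k}$. For $\mathbf{u}\in\mathbb{F}_2^n$ let $f_{\mathbf{u}}(\mathbf{x})=f(\mathbf{x})+2^{k-1}(\mathbf{u}\cdot\mathbf{x})\in\mathbb{Z}_{2^k}$ and $b_j^{(\mathbf{u})}=|\{\mathbf{x}\in\mathbb{F}_2^n: f_{\mathbf{u}}(\mathbf{x})=j\}|$ for $0\le j\le 2^k-1$. Then $f$ is gbent if and only if for every $\mathbf{u}\in\mathbb{F}_2^n$ there exists an integer $\rho_{\mathbf{u}}$ with $0\le\rho_{\mathbf{u}}\le 2^{k-1}-1$ such that $b^{(\mathbf{u})}_{2^{k-1}+\rho_{\mathbf{u}}}=b^{(\mathbf{u})}_{\rho_{\mathbf{u}}}\pm 2^m$ and $b^{(\mathbf{u})}_{2^{k-1}+j}=b^{(\mathbf{u})}_j$ for all $0\le j\le 2^{k-1}-1$ with $j\ne\rho_{\mathbf{u}}$.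
   Context: For an integer $q\ge 2$, $\zeta_q=e^{2\pi i/q}$. The generalized Walsh–Hadamard transform of $f:\mathbb{F}_2^n\to\mathbb{Z}_q$ is $\mathcal{H}^{(q)}_f(\mathbf{u})=\sum_{\mathbf{x}\in\mathbb{F}_2^n}\zeta_q^{f(\mathbf{x})}(-1)^{\mathbf{u}\cdot\mathbf{x}}$, with $\mathbf{u}\cdot\mathbf{x}$ the usual dot product over $\mathbb{F}_2$; $f$ is gbent if $|\mathcal{H}^{(q)}_f(\mathbf{u})|=2^{n/2}$ for all $\mathbf{u}$. Here $q=2^k$. *)

From HB Require Import structures.
From mathcomp Require Import all_boot all_order all_algebra all_field.
Set Implicit Arguments. Unset Strict Implicit. Unset Printing Implicit Defensive.
Import Order.TTheory GRing.Theory Num.Theory.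
Local Open Scope ring_scope.

(* zeta q = e^{2 pi i / q}: q.-root (-1) is e^{i pi / q} (minimal argument root) *)
Definition zeta (q : nat) : algC := (q.-root (-1)) ^+ 2.

Definition dotF2 (n : nat) (u x : 'rV['F_2]_n) : 'F_2 := \sum_(i < n) u ord0 i * x ord0 i.

Definition gwht (q n : nat) (f : 'rV['F_2]_n -> 'Z_q) (u : 'rV['F_2]_n) : algC :=
  \sum_(x : 'rV['F_2]_n) zeta q ^+ (val (f x)) * (-1) ^+ (val (dotF2 u x)).

Definition gbent (q n : nat) (f : 'rV['F_2]_n -> 'Z_q) : Prop :=
  forall u : 'rV['F_2]_n, `|gwht f u| = sqrtC (2 ^+ n).

Definition fshift (k n : nat) (f : 'rV['F_2]_n -> 'Z_(2 ^ k)) (u x : 'rV['F_2]_n)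
  : 'Z_(2 ^ k) := f x + (2 ^ k.-1)%:R * (val (dotF2 u x))%:R.

Definition bcount (k n : nat) (f : 'rV['F_2]_n -> 'Z_(2 ^ k)) (u : 'rV['F_2]_n)
  (j : nat) : nat := #|[set x : 'rV['F_2]_n | fshift f u x == (j%:R : 'Z_(2 ^ k))]|.

From HB Require Import structures.
From mathcomp Require Import all_boot all_order all_algebra all_field.
From mathcomp Require Import ring zify.
Set Implicit Arguments.
Unset Strict Implicit.
Unset Printing Implicit Defensive.
Import Order.TTheory GRing.Theory Num.Theory.
Local Open Scope ring_scope.

(* With N = 2^(k-1) and zeta a primitive 2N-th root of unity (so zeta^N = -1),
   grouping the terms of the transform by the value of f_u gives
   H_f(u) = D_u(zeta) with D_u = sum_(j < N) (b_j - b_(N+j)) X^j, so f is gbent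
   iff |D_u(zeta)| = 2^m for every u.  In Z[zeta] the prime lambda = 1 - zeta
   satisfies 2 = lambda^N * unit, and a lambda-adic valuation argument shows
   that |D(zeta)|^2 = 4^m forces 2^m to divide every coefficient of D.  The
   quotient B then has |B(zeta)| = 1; the same holds at every Galois conjugate
   zeta^t, t odd, and averaging over them gives sum_i B_i^2 = 1, so
   D = +- 2^m X^rho. *)

Lemma int_sum_sqr_eq1 n (B : 'I_n -> int) : \sum_(i < n) B i ^+ 2 = 1 ->
  exists2 r : 'I_n, B r = 1 \/ B r = -1 & forall j, j != r -> B j = 0.
Proof.
move=> sum1.
have [r nz_r | all0] := pickP (fun i => B i != 0); last first.
  by move: sum1; rewrite big1 // => i _; move/negbFE/eqP: (all0 i) => ->; rewrite expr0n.
have rest_ge0 : 0 <= \sum_(j < n | j != r) B j ^+ 2.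
  by rewrite sumr_ge0 // => j _; rewrite sqr_ge0.
have sqr_ge1 : 1 <= B r ^+ 2 by move: nz_r; rewrite expr2 => /eqP; nia.
have [/eqP Br_sqr /eqP rest0] : B r ^+ 2 = 1 /\ \sum_(j < n | j != r) B j ^+ 2 = 0.
  move: sum1 rest_ge0 sqr_ge1; rewrite (bigD1 r) //=.
  by set x := B r ^+ 2; set y := \sum_(j < n | j != r) _; lia.
move: Br_sqr; rewrite sqrf_eq1 => /orP Br; exists r; first by case: Br => /eqP; [left | right].
move: rest0; rewrite psumr_eq0 => [/allP rest0 j neq_jr|i _]; last exact: sqr_ge0.
by move: (rest0 j (mem_index_enum _)); rewrite neq_jr sqrf_eq0 => /eqP.
Qed.

Lemma prim_root_2pow (R : idomainType) a (w : R) :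
  2%:R != 0 :> R -> w ^+ (2 ^ a) = -1 -> (2 * 2 ^ a).-primitive_root w.
Proof.
move=> two_nz wN.
have w_order : w ^+ (2 * 2 ^ a) = 1 by rewrite mulnC exprM wN sqrrN expr1n.
have order_gt0 : (0 < 2 * 2 ^ a)%N by rewrite muln_gt0 expn_gt0.
have [d prim_d] := prim_order_exists order_gt0 w_order.
have prime2 : prime 2 by [].
rewrite -expnS => /(dvdn_pfactor _ _ prime2)[i i_le def_d].
rewrite {d}def_d in prim_d.
suff i_eq : i = a.+1 by rewrite i_eq in prim_d.
apply/eqP; rewrite eqn_leq i_le /=; apply: contraNT two_nz; rewrite -ltnNge ltnS.
move=> i_le_a; have : w ^+ (2 ^ a) == 1 by rewrite -(prim_order_dvd prim_d) dvdn_exp2l.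
by rewrite wN eq_sym -subr_eq0 opprK -mulr2n.
Qed.

Lemma root_prim_root_coprime n (z : algC) (P : {poly int}) t :
  n.-primitive_root z -> coprime t n ->
  root (map_poly intr P) z -> root (map_poly intr P) (z ^+ t).
Proof.
move=> prim_z co_t Pz; have [p [Dp _] dv_p] := minCpolyP z.
rewrite (minCpoly_cyclotomic prim_z) in Dp.
have Pq : map_poly (ratr : rat -> algC) (map_poly (intr : int -> rat) P) = map_poly intr P.
  by rewrite -map_poly_comp; apply: eq_map_poly => x /=; rewrite rmorph_int.
have : cyclotomic z n %| map_poly intr P by rewrite Dp -Pq dvdp_map -dv_p Pq.
by move/root_dvdp; apply; rewrite root_cyclotomic ?prim_root_exp_coprime.
Qed.

Lemma dvdz_coef_scale (A : {poly int}) d : (forall i, (d %| A`_i)%Z) ->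
  exists2 B : {poly int}, A = d *: B & (size B <= size A)%N.
Proof.
move=> dvd_A; exists (\poly_(i < size A) (A`_i %/ d)%Z); last exact: size_poly.
apply/polyP => i; rewrite coefZ coef_poly.
by case: ltnP => [_ | le_i]; [rewrite mulrC divzK | rewrite mulr0 nth_default].
Qed.

Lemma sum_unity_root_exp_eq0 (R : idomainType) n (w : R) :
  w ^+ n = 1 -> w != 1 -> \sum_(s < n) w ^+ s = 0.
Proof.
move=> wn w_neq1; have /esym/eqP := subrX1 w n.
by rewrite wn subrr mulf_eq0 subr_eq0 (negPf w_neq1) => /eqP.
Qed.

Section TwoPowerCyclotomic.

Variables (a : nat) (z : algC).
Hypothesis zN : z ^+ (2 ^ a) = -1.

Local Notation N := (2 ^ a)%N.
Local Notation lambda := (1 - z).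

Lemma z_prim : (2 * N).-primitive_root z.
Proof. by apply: prim_root_2pow; rewrite ?pnatr_eq0. Qed.

Lemma z_Aint : z \in Aint. Proof. exact: Aint_prim_root z_prim. Qed.

Lemma z_neq0 : z != 0.
Proof. by rewrite (prim_root_eq0 z_prim) -lt0n (prim_order_gt0 z_prim). Qed.

Lemma lambda_Aint : lambda \in Aint. Proof. by rewrite rpredB ?z_Aint. Qed.

Lemma lambda_neq0 : lambda != 0.
Proof.
rewrite subr_eq0; apply/eqP => z1; move: zN; rewrite -z1 expr1n => /eqP.
by rewrite -subr_eq0 opprK -mulr2n pnatr_eq0.
Qed.

Lemma Aint_lambda_div x : x / lambda \in Aint -> x \in Aint.
Proof. by move=> x_div; rewrite -[x](divfK lambda_neq0) rpredM ?lambda_Aint. Qed.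

Lemma one_subX_div_lambda i : (1 - z ^+ i) / lambda \in Aint.
Proof.
have -> : 1 - z ^+ i = lambda * \sum_(j < i) z ^+ j by rewrite -opprB subrX1 -mulNr opprB.
rewrite [lambda * _]mulrC mulfK ?lambda_neq0 // rpred_sum // => j _.
exact: rpredX z_Aint.
Qed.

(* The residue field at lambda is F_2, so these are the units at lambda. *)
Definition lambda_unit (x : algC) : Prop :=
  exists2 c : int, odd `|c|%N & (x - c%:~R) / lambda \in Aint.

Lemma lambda_unit_Aint x : lambda_unit x -> x \in Aint.
Proof. by case=> c _ /Aint_lambda_div x_c; rewrite -(subrK c%:~R x) rpredD ?rpred_int. Qed.

Lemma lambda_unit1 : lambda_unit 1.
Proof. by exists 1 => //; rewrite subrr mul0r rpred0. Qed.

Lemma lambda_unitN x : lambda_unit x -> lambda_unit (- x).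
Proof.
case=> c odd_c x_c; exists (- c); first by rewrite abszN.
by rewrite intrN -opprD mulNr rpredN.
Qed.

Lemma lambda_unitM x y : lambda_unit x -> lambda_unit y -> lambda_unit (x * y).
Proof.
case=> c odd_c x_c uy; have y_Aint := lambda_unit_Aint uy; case: uy => d odd_d y_d.
exists (c * d); first by rewrite abszM oddM odd_c.
have -> : (x * y - (c * d)%:~R) / lambda =
    (x - c%:~R) / lambda * y + c%:~R * ((y - d%:~R) / lambda).
  by rewrite intrM; field; rewrite lambda_neq0.
by apply: rpredD; apply: rpredM => //; apply: rpred_int.
Qed.

Lemma lambda_unitX x n : lambda_unit x -> lambda_unit (x ^+ n).
Proof.
move=> ux; elim: n => [|n IH]; first exact: lambda_unit1.
by rewrite exprS; apply: lambda_unitM.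
Qed.

(* (1 - w)^2 = 1 - w^2 - 2 w (1 - w), i.e. squaring is Frobenius modulo 2 lambda. *)
Lemma lambda_exp2X b :
  exists2 q, q / lambda \in Aint & lambda ^+ (2 ^ b) = 1 - z ^+ (2 ^ b) + 2 * q.
Proof.
elim: b => [|b [q q_div IH]].
  by exists 0; rewrite ?mul0r ?rpred0 // !expn0 !expr1 mulr0 addr0.
set w := z ^+ (2 ^ b) in IH.
have q_Aint := Aint_lambda_div q_div.
have w_Aint : w \in Aint by rewrite rpredX ?z_Aint.
have w_div : (1 - w) / lambda \in Aint by apply: one_subX_div_lambda.
exists (- w * (1 - w) + 2 * q * (1 - w) + 2 * q ^+ 2).
  have -> : (- w * (1 - w) + 2 * q * (1 - w) + 2 * q ^+ 2) / lambda =
      - w * ((1 - w) / lambda) + 2 * (1 - w) * (q / lambda) + 2 * q * (q / lambda).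
    by field; rewrite lambda_neq0.
  by rewrite !rpredD //; apply: rpredM => //; rewrite ?rpredN ?rpredM ?rpredB ?rpred1 ?rpred_nat.
by rewrite expnS mulnC !exprM IH -/w; ring.
Qed.

Lemma lambda_exp_half : exists2 s, lambda_unit s & lambda ^+ N = 2 * s.
Proof.
have [q q_div lambdaN] := lambda_exp2X a.
exists (1 + q); first by exists 1 => //; rewrite (_ : 1%:~R = 1) // [1 + q]addrC addrK.
by rewrite lambdaN zN opprK mulrDr mulr1.
Qed.

Lemma odd_int_lambda_ndiv (c : int) : odd `|c|%N -> c%:~R / lambda \notin Aint.
Proof.
move=> odd_c; apply/negP => c_div; have [s us lambdaN] := lambda_exp_half.
have s_neq0 : s != 0.
  by apply/eqP => s0; move: lambdaN; rewrite s0 mulr0; apply/eqP; rewrite expf_neq0 ?lambda_neq0.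
have half_Aint : c%:~R ^+ N / 2 \in Aint.
  have -> : c%:~R ^+ N / 2 = (c%:~R / lambda) ^+ N * s :> algC.
    by rewrite expr_div_n lambdaN; field; rewrite s_neq0.
  by apply: rpredM; [apply: rpredX | exact: lambda_unit_Aint us].
have half_rat : c%:~R ^+ N / 2 \in Crat by rewrite rpred_div ?rpredX ?rpred_int ?rpred_nat.
have /intrP[w Dw] := Cint_rat_Aint half_rat half_Aint.
have : c ^+ N = 2 * w.
  by apply: (@intr_inj algC); rewrite rmorphXn rmorphM /= -Dw; field.
move/(congr1 (fun x : int => odd `|x|%N)).
by rewrite abszX abszM oddX oddM odd_c expn_eq0.
Qed.

Lemma lambda_unit_ndiv x : lambda_unit x -> x / lambda \notin Aint.
Proof.
case=> c odd_c x_c; apply: contraNN (odd_int_lambda_ndiv odd_c) => x_div.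
have -> : c%:~R / lambda = x / lambda - (x - c%:~R) / lambda by field; rewrite lambda_neq0.
exact: rpredB.
Qed.

Local Notation M := (2 * N).-1.
Local Notation zbar := (z ^+ M).

Lemma z_zbar : z * zbar = 1.
Proof. by rewrite -exprS prednK ?(prim_expr_order z_prim) ?(prim_order_gt0 z_prim). Qed.

Lemma norm_z : `|z| = 1.
Proof.
apply/eqP; rewrite -(pexpr_eq1 (prim_order_gt0 z_prim)) ?normr_ge0 //.
by rewrite -normrX (prim_expr_order z_prim) normr1.
Qed.

Lemma conj_z : z^* = zbar.
Proof. by apply: (mulfI z_neq0); rewrite z_zbar -normCK norm_z expr1n. Qed.

Lemma conj_lambda : lambda^* = - zbar * lambda.
Proof. by rewrite rmorphB rmorph1 /= conj_z mulrBr mulr1 mulNr mulrC z_zbar opprK addrC. Qed.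

Lemma zbar_Aint : zbar \in Aint. Proof. by rewrite rpredX ?z_Aint. Qed.

Lemma lambda_unit_Nzbar : lambda_unit (- zbar).
Proof.
exists (-1) => //; rewrite (_ : (-1)%:~R = -1) // opprK.
have -> : - zbar + 1 = - zbar * lambda by rewrite mulrBr mulr1 mulNr opprK mulrC z_zbar.
by rewrite mulfK ?lambda_neq0 // rpredN zbar_Aint.
Qed.

Lemma lambda_unit_conj x : lambda_unit x -> lambda_unit x^*.
Proof.
case=> c odd_c x_c; exists c => //.
have -> : (x^* - c%:~R) / lambda = - zbar * ((x - c%:~R) / lambda)^*.
  by rewrite fmorph_div rmorphB /= rmorph_int conj_lambda; field; rewrite lambda_neq0 expf_neq0 ?z_neq0.
by rewrite rpredM ?rpredN ?zbar_Aint ?Aint_aut.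
Qed.

Definition evalz (A : {poly int}) : algC := (map_poly intr A).[z].

Lemma evalz_Aint A : evalz A \in Aint.
Proof.
rewrite /evalz horner_coef rpred_sum // => i _.
by rewrite coef_map rpredM ?rpred_int ?rpredX ?z_Aint.
Qed.

Lemma evalzZ (d : int) A : evalz (d *: A) = d%:~R * evalz A.
Proof. by rewrite /evalz map_polyZ hornerZ. Qed.

Lemma evalz_mulXsub1C Q (c : int) : evalz (Q * ('X - 1) + c%:P) = - lambda * evalz Q + c%:~R.
Proof.
rewrite /evalz rmorphD rmorphM /= map_polyXsubC map_polyC /= !hornerE.
by rewrite rmorph1; ring.
Qed.

Lemma evalz_lambda_adic (A : {poly int}) : (forall i, (2 %| A`_i)%Z) \/
  exists v g h, [/\ (v < size A)%N, lambda_unit g, h \in Aint &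
                    evalz A = lambda ^+ v * g + 2 * h].
Proof.
have [n] := ubnP (size A); elim: n A => // n IH A /ltnSE size_A.
have [-> | A_neq0] := eqVneq A 0; first by left => i; rewrite coef0 dvdz0.
set c := A.[1].
have /factor_theorem [Q DQ] : root (A - c%:P) 1 by rewrite rootE !hornerE subrr.
have DA : A = Q * ('X - 1) + c%:P by rewrite -DQ subrK.
have evalA : evalz A = - lambda * evalz Q + c%:~R by rewrite {1}DA evalz_mulXsub1C.
have [odd_c | even_c] := boolP (odd `|c|%N).
  right; exists 0%N, (evalz A), 0; split; rewrite ?size_poly_gt0 ?rpred0 //.
    exists c => //; have -> : (evalz A - c%:~R) / lambda = - evalz Q.
      by rewrite evalA; field; rewrite lambda_neq0.
    by rewrite rpredN evalz_Aint.
  by rewrite expr0 mul1r mulr0 addr0.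
have two_dvd_c : (2 %| c)%Z by rewrite dvdzE dvdn2.
have size_Q : (size Q < size A)%N.
  have [-> | Q_neq0] := eqVneq Q 0; first by rewrite size_poly0 size_poly_gt0.
  have <- : size (A - c%:P) = (size Q).+1.
    by rewrite DQ size_Mmonic ?monicXsubC // size_XsubC addn2.
  rewrite (leq_trans (size_polyD _ _)) // geq_max leqnn size_polyN.
  by rewrite (leq_trans (size_polyC_leq1 c)) // size_poly_gt0.
case: (IH Q (leq_trans size_Q size_A)) => [even_Q | [v [g [h [v_lt ug h_Aint evalQ]]]]].
  left => i; rewrite DA coefD mulrBr mulr1 coefB coefMX coefC.
  by case: (i == 0%N); rewrite ?sub0r ?addr0 ?rpredD ?rpredN ?rpredB ?even_Q.
right; exists v.+1, (- g), ((c %/ 2)%Z%:~R - lambda * h); split.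
- exact: leq_ltn_trans v_lt size_Q.
- exact: lambda_unitN.
- by rewrite rpredB ?rpred_int ?rpredM ?lambda_Aint.
- by rewrite evalA evalQ -{1}(divzK two_dvd_c) intrM exprS; ring.
Qed.

Lemma evalz_norm_div4_even (A : {poly int}) : (size A <= N)%N ->
  evalz A * (evalz A)^* / 4 \in Aint -> forall i, (2 %| A`_i)%Z.
Proof.
move=> size_A y_Aint; case: (evalz_lambda_adic A) => // [[v [g [h [v_lt ug h_Aint evalA]]]]].
have [s us lambdaN] := lambda_exp_half.
set d := (N - v.+1)%N; have N_eq : N = (v + d).+1 by rewrite /d -addSn subnKC ?(leq_trans v_lt).
have Ds : s = lambda ^+ v * lambda ^+ d * lambda / 2.
  by rewrite -exprD -exprSr -N_eq lambdaN; field.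
set y := evalz A * (evalz A)^* / 4 in y_Aint.
have g_Aint := lambda_unit_Aint ug.
set W := g * h^* + (- zbar) ^+ v * g^* * h.
have W_Aint : W \in Aint.
  by rewrite rpredD ?rpredM ?rpredX ?rpredN ?zbar_Aint ?Aint_aut.
(* Multiply the expansion of |A(z)|^2 by s^2 / lambda^(2v+1), using 4 = (lambda^N / s)^2. *)
have key : (- zbar) ^+ v * g * g^* * s ^+ 2 / lambda =
    lambda ^+ d * lambda ^+ d * lambda * y - lambda ^+ d * s * W
    - lambda ^+ d * lambda ^+ d * lambda * (h * h^*).
  rewrite /y /W evalA rmorphD !rmorphM rmorphXn /= conj_lambda rmorph_nat exprMn Ds.
  by field; rewrite lambda_neq0.
have : (- zbar) ^+ v * g * g^* * s ^+ 2 / lambda \in Aint.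
  by clearbody y; rewrite key !rpredB ?rpredM ?rpredX ?lambda_Aint ?(lambda_unit_Aint us) ?Aint_aut.
have ug_conj := lambda_unit_conj ug.
have u_lhs := lambda_unitM (lambda_unitM (lambda_unitM
  (lambda_unitX v lambda_unit_Nzbar) ug) ug_conj) (lambda_unitX 2 us).
by rewrite (negPf (lambda_unit_ndiv u_lhs)).
Qed.

Lemma evalz_norm_4X_dvd (A : {poly int}) m : (size A <= N)%N ->
  evalz A * (evalz A)^* = 4 ^+ m -> forall i, (2 ^+ m %| A`_i)%Z.
Proof.
elim: m A => [|m IH] A size_A normA i; first by rewrite expr0 dvd1z.
have [|B DA size_B] := @dvdz_coef_scale A 2.
  apply: evalz_norm_div4_even => //.
  by rewrite normA exprS [4 * _]mulrC mulfK ?pnatr_eq0 // rpredX ?rpred_nat.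
have normB : evalz B * (evalz B)^* = 4 ^+ m.
  apply: (@mulfI _ 4); first by rewrite pnatr_eq0.
  by rewrite -exprS -normA DA evalzZ rmorphM rmorph_int; ring.
by rewrite DA coefZ exprS dvdz_mul ?dvdzz // IH // (leq_trans size_B).
Qed.

Lemma sum_odd_exp_orthogonal i j : (i < N)%N -> (j < N)%N ->
  \sum_(s < N) (z ^+ (2 * s + 1)) ^+ i * ((z ^+ (2 * s + 1)) ^+ M) ^+ j =
    if i == j then N%:R else 0.
Proof.
move=> lt_iN lt_jN; set E := (i + M * j)%N.
have z2N : z ^+ (2 * N) = 1 := prim_expr_order z_prim.
have M1 : (M + 1 = 2 * N)%N by rewrite addn1 prednK ?(prim_order_gt0 z_prim).
rewrite (eq_bigr (fun s : 'I_N => z ^+ E * (z ^+ (2 * E)) ^+ s)) => [|s _]; last first.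
  by rewrite -!exprM -!exprD; congr (z ^+ _); rewrite /E; ring.
rewrite -mulr_sumr; case: eqP => [eq_ij | neq_ij].
  have -> : E = (2 * N * i)%N by rewrite /E -eq_ij -[in RHS]M1 mulnDl mul1n addnC.
  rewrite mulnCA !(exprM z (2 * N)) z2N !expr1n mul1r.
  by rewrite (eq_bigr (fun _ => 1)) ?sumr_const ?card_ord // => s _; rewrite expr1n.
(* z^(2E) = z^(2(i - j)) is an N-th root of unity, and not 1 as 0 < |i - j| < N. *)
apply/eqP; rewrite mulf_eq0 sum_unity_root_exp_eq0 ?eqxx ?orbT //.
  by rewrite -exprM mulnC mulnA (mulnC N 2) exprM z2N expr1n.
have z2_prim : N.-primitive_root (z ^+ 2).
  by have := exp_prim_root z_prim 2; rewrite gcdnMr mulKn.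
apply: contra_notN neq_ij => /eqP E1.
have : (z ^+ 2) ^+ i = (z ^+ 2) ^+ j.
  rewrite -[RHS]mul1r -E1 -!exprM -exprD.
  rewrite (_ : (2 * E + 2 * j = 2 * i + 2 * N * (2 * j))%N); last by rewrite /E; nia.
  by rewrite exprD (exprM z (2 * N)) z2N expr1n mulr1.
by move/eqP; rewrite (eq_prim_root_expr z2_prim) !modn_small // => /eqP.
Qed.

Lemma evalz_norm1_conjugate (B : {poly int}) t : coprime t (2 * N) ->
  evalz B * (evalz B)^* = 1 ->
  (map_poly intr B).[z ^+ t] * (map_poly intr B).[(z ^+ t) ^+ M] = 1 :> algC.
Proof.
move=> co_t normB; set P : {poly int} := B * (B \Po 'X^M) - 1.
have evalP x : (map_poly intr P).[x] =
    (map_poly intr B).[x] * (map_poly intr B).[x ^+ M] - 1 :> algC.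
  by rewrite rmorphB rmorphM rmorph1 /= map_comp_poly map_polyXn !hornerE horner_comp hornerXn.
have conj_eval : (evalz B)^* = (map_poly intr B).[z ^+ M].
  rewrite /evalz !horner_coef rmorph_sum; apply: eq_bigr => i _.
  by rewrite rmorphM rmorphXn /= coef_map /= rmorph_int conj_z.
apply/eqP; rewrite -subr_eq0 -evalP; apply: root_prim_root_coprime co_t _.
  exact: z_prim.
by rewrite /root evalP subr_eq0 -conj_eval -/(evalz B) normB.
Qed.

Lemma evalz_norm1_sum_sqr (B : {poly int}) : (size B <= N)%N ->
  evalz B * (evalz B)^* = 1 -> \sum_(i < N) B`_i ^+ 2 = 1.
Proof.
move=> size_B normB; set Bc := map_poly (intr : int -> algC) B.
have size_Bc : (size Bc <= N)%N by rewrite size_map_inj_poly //; apply: intr_inj.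
(* Average |B(w)|^2 = 1 over the N Galois conjugates w = z^(2s+1) of z. *)
have sum_conj : \sum_(s < N) Bc.[z ^+ (2 * s + 1)] * Bc.[(z ^+ (2 * s + 1)) ^+ M] = N%:R.
  rewrite (eq_bigr (fun _ => 1)) ?sumr_const ?card_ord // => s _.
  by apply: evalz_norm1_conjugate; rewrite // -expnS coprime_pexpr // coprimen2 addn1 /= oddM.
have sum_coef : \sum_(s < N) Bc.[z ^+ (2 * s + 1)] * Bc.[(z ^+ (2 * s + 1)) ^+ M] =
    \sum_(i < N) Bc`_i ^+ 2 * N%:R.
  transitivity (\sum_(i < N) \sum_(j < N) Bc`_i * Bc`_j * (if (i : nat) == j then N%:R else 0)).
    under eq_bigr => s _ do rewrite !(horner_coef_wide _ size_Bc) mulr_suml.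
    rewrite exchange_big; apply: eq_bigr => i _; under eq_bigr => s _ do rewrite mulr_sumr.
    rewrite exchange_big; apply: eq_bigr => j _.
    rewrite -sum_odd_exp_orthogonal // mulr_sumr; apply: eq_bigr => s _; ring.
  apply: eq_bigr => i _; rewrite (bigD1 i) //= eqxx big1 ?addr0 => [|j /negPf neq_ji].
    by rewrite expr2.
  by rewrite (_ : (i : nat) == j = false) ?mulr0 // eq_sym; apply: neq_ji.
have sum_sqr : \sum_(i < N) Bc`_i ^+ 2 = 1.
  apply: (@mulIf _ N%:R); first by rewrite pnatr_eq0 -lt0n expn_gt0.
  by rewrite mulr_suml -sum_coef sum_conj mul1r.
apply: (@intr_inj algC); rewrite rmorph_sum rmorph1 -[RHS]sum_sqr; apply: eq_bigr => i _.
by rewrite /Bc coef_map /= rmorphXn.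
Qed.

Lemma evalz_norm_2X (A : {poly int}) m : (size A <= N)%N ->
  `|evalz A| = 2 ^+ m <->
  exists2 r : 'I_N, A`_r = 2 ^+ m \/ A`_r = - 2 ^+ m & forall j : 'I_N, j != r -> A`_j = 0.
Proof.
move=> size_A; split => [normA | [r Ar A0]].
  have normA4 : evalz A * (evalz A)^* = 4 ^+ m.
    by rewrite -normCK normA -exprM mulnC exprM (_ : 2 ^+ 2 = 4) // -natrX.
  have [B DA size_B] := dvdz_coef_scale (evalz_norm_4X_dvd size_A normA4).
  have normB : evalz B * (evalz B)^* = 1.
    apply: (@mulfI _ (4 ^+ m)); first by rewrite expf_neq0 // pnatr_eq0.
    rewrite mulr1 -[RHS]normA4 DA evalzZ rmorphM rmorph_int /= rmorphXn.
    by rewrite (_ : 4 = 2 * 2) ?exprMn; [ring | rewrite -natrM].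
  have [r Br B0] := int_sum_sqr_eq1 (evalz_norm1_sum_sqr (leq_trans size_B size_A) normB).
  exists r; first by rewrite DA coefZ; case: Br => ->; [left; rewrite mulr1 | right; rewrite mulrN1].
  by move=> j neq_jr; rewrite DA coefZ B0 ?mulr0.
have size_Ac : (size (map_poly (intr : int -> algC) A) <= N)%N.
  by rewrite size_map_inj_poly //; apply: intr_inj.
rewrite /evalz (horner_coef_wide _ size_Ac) (bigD1 r) //= big1 ?addr0 => [|j /A0 Aj0]; last first.
  by rewrite coef_map Aj0 mul0r.
rewrite coef_map normrM normrX norm_z expr1n mulr1.
by case: Ar => ->; rewrite /= ?intrN ?normrN rmorphXn /= normrX normr_nat.
Qed.

End TwoPowerCyclotomic.

Lemma poly_diff_single_coef N (b : nat -> nat) (c : int) : (0 < N)%N ->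
  (exists2 r : 'I_N,
     (\poly_(j < N) ((b j)%:Z - (b (N + j)%N)%:Z))`_r = c \/
     (\poly_(j < N) ((b j)%:Z - (b (N + j)%N)%:Z))`_r = - c &
     forall j : 'I_N, j != r -> (\poly_(j < N) ((b j)%:Z - (b (N + j)%N)%:Z))`_j = 0) <->
  (exists rho : nat, (rho <= N - 1)%N /\
     ((b (N + rho)%N)%:Z = (b rho)%:Z + c \/ (b (N + rho)%N)%:Z = (b rho)%:Z - c) /\
     (forall j : nat, (j <= N - 1)%N -> j <> rho -> b (N + j)%N = b j)).
Proof.
move=> N_gt0; set D := \poly_(j < N) _.
have D_coef j : (j < N)%N -> D`_j = (b j)%:Z - (b (N + j)%N)%:Z by move=> lt_jN; rewrite coef_poly lt_jN.
split=> [[r Dr D0] | [rho [le_rho [b_rho b_j]]]].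
  exists r; split; first by have := ltn_ord r; lia.
  split; first by move: Dr; rewrite D_coef // => -[] Dr; [right | left]; lia.
  move=> j le_j neq_jr; have lt_jN : (j < N)%N by lia.
  have /D0 : Ordinal lt_jN != r by apply/eqP => /(congr1 val).
  by rewrite /= D_coef //; lia.
have lt_rhoN : (rho < N)%N by lia.
exists (Ordinal lt_rhoN); first by rewrite /= D_coef //; case: b_rho => ->; [right | left]; lia.
move=> j neq_jr; rewrite D_coef // b_j //; first by rewrite subrr.
  by have := ltn_ord j; lia.
by move=> eq_jr; move/eqP: neq_jr; apply; apply: val_inj.
Qed.

Lemma sum_exp_halves K N (w : algC) (b : nat -> nat) : K = (2 * N)%N -> w ^+ N = -1 ->
  \sum_(j < K) (b j)%:R * w ^+ j = evalz w (\poly_(j < N) ((b j)%:Z - (b (N + j)%N)%:Z)).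
Proof.
move=> -> wN; rewrite mul2n -addnn big_split_ord /= /evalz.
set D := map_poly _ _; have size_D : (size D <= N)%N.
  by rewrite size_map_inj_poly ?size_poly //; apply: intr_inj.
rewrite (horner_coef_wide _ size_D) -big_split; apply: eq_bigr => i _ /=.
by rewrite coef_map coef_poly ltn_ord /= exprD wN intrB -!pmulrn; ring.
Qed.

Lemma zeta_pow2_exp_half k : (0 < k)%N -> zeta (2 ^ k) ^+ (2 ^ k.-1) = -1.
Proof. by move=> k_gt0; rewrite /zeta -exprM -expnS prednK // rootCK // expn_gt0. Qed.

Lemma gwht_bcount k n (f : 'rV['F_2]_n -> 'Z_(2 ^ k)) u : (0 < k)%N ->
  gwht f u = \sum_(j : 'Z_(2 ^ k)) (bcount f u j)%:R * zeta (2 ^ k) ^+ j.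
Proof.
move=> k_gt0; have wN := zeta_pow2_exp_half k_gt0; set w := zeta (2 ^ k) in wN *.
have q_gt1 : (1 < 2 ^ k)%N by rewrite -{1}(expn0 2) ltn_exp2l.
have wq : w ^+ (2 ^ k) = 1.
  by have := prim_expr_order (z_prim wN); rewrite -expnS prednK.
have w_add (y1 y2 : 'Z_(2 ^ k)) : w ^+ val (y1 + y2) = w ^+ val y1 * w ^+ val y2.
  have wq' : w ^+ (Zp_trunc (2 ^ k)).+2 = 1 by rewrite Zp_cast.
  by rewrite /= (expr_mod _ wq') exprD.
have w_nat i : w ^+ val (i%:R : 'Z_(2 ^ k)) = w ^+ i by rewrite /= val_Zp_nat // expr_mod.
have term x : w ^+ val (f x) * (-1) ^+ val (dotF2 u x) = w ^+ val (fshift f u x).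
  by rewrite /fshift w_add -natrM w_nat exprM wN.
rewrite /gwht; under eq_bigr => x _ do rewrite term.
rewrite (partition_big (fshift f u) xpredT) //; apply: eq_bigr => j _.
rewrite (eq_bigr (fun _ => w ^+ val j)) => [|x /eqP -> //].
rewrite sumr_const mulr_natl /bcount natr_Zp; congr (_ *+ _).
by apply: eq_card => x; rewrite inE.
Qed.

Lemma gwht_norm_spike k n m (f : 'rV['F_2]_n -> 'Z_(2 ^ k)) u : (0 < k)%N ->
  `|gwht f u| = 2 ^+ m <->
  exists rho : nat, (rho <= 2 ^ k.-1 - 1)%N /\
     ((bcount f u (2 ^ k.-1 + rho))%:Z = (bcount f u rho)%:Z + (2 ^ m)%:Z \/
      (bcount f u (2 ^ k.-1 + rho))%:Z = (bcount f u rho)%:Z - (2 ^ m)%:Z) /\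
     (forall j : nat, (j <= 2 ^ k.-1 - 1)%N -> j <> rho ->
        bcount f u (2 ^ k.-1 + j) = bcount f u j).
Proof.
move=> k_gt0; have wN := zeta_pow2_exp_half k_gt0.
have q_split : (Zp_trunc (2 ^ k)).+2 = (2 * 2 ^ k.-1)%N.
  by rewrite Zp_cast -?expnS ?prednK // -{1}(expn0 2) ltn_exp2l.
rewrite gwht_bcount // (sum_exp_halves _ q_split wN).
have two_m : 2 ^+ m = (2 ^ m)%:Z by rewrite -natz natrX.
rewrite (evalz_norm_2X wN) ?size_poly // two_m.
by apply: poly_diff_single_coef; rewrite expn_gt0.
Qed.

Theorem mainTheorem3 (k n m : nat) (f : 'rV['F_2]_n -> 'Z_(2 ^ k)) :
  (1 < k)%N -> n = (2 * m)%N ->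
  (gbent f <->
   forall u : 'rV['F_2]_n, exists rho : nat,
     (rho <= 2 ^ k.-1 - 1)%N /\
     ((bcount f u (2 ^ k.-1 + rho))%:Z = (bcount f u rho)%:Z + (2 ^ m)%:Z \/
      (bcount f u (2 ^ k.-1 + rho))%:Z = (bcount f u rho)%:Z - (2 ^ m)%:Z) /\
     (forall j : nat, (j <= 2 ^ k.-1 - 1)%N -> j <> rho ->
        bcount f u (2 ^ k.-1 + j) = bcount f u j)).
Proof.
move=> k_gt1 n_2m; have k_gt0 := ltnW k_gt1.
have sqrt_2n : sqrtC (2 ^+ n) = 2 ^+ m :> algC.
  by rewrite n_2m mulnC exprM sqrCK // exprn_ge0 // ler0n.
by rewrite /gbent sqrt_2n; split=> bent u; apply/(gwht_norm_spike m f u k_gt0)/bent.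
Qed.
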